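(* Let $e>1$ be odd, $t\ge0$, $\mathbf c=(t+(1-e)/2,0)$, and let $\mu$ be a bipartition. Let $0\le j_1\ne j_2\le e-1$ and suppose $\tilde f_{j_i}|\mu,\mathbf c\rangle\ne0$ for $i=1,2$; write $\tilde f_{j_i}|\mu,\mathbf c\rangle=|\nu_i,\mathbf c\rangle$. Then the $e$-cores of $\Phi_t(\nu_1)$ and $\Phi_t(\nu_2)$ are distinct.
   Context: Crystal graph $\mathcal G_{\mathbf c,e}$: vertices $|\nu,\mathbf c\rangle$, $\nu$ a bipartition; nodes $(a,b,j)$ of $\nu^j$ have content $b-a+c_j$ and residue content mod $e$; for residue $i$ order the addable and removable $i$-nodes by increasing content (ties: larger $j$ first), write them as a word in $A$ (addable)/$R$ (removable), cancel consecutive $RA$ recursively to obtain $A^\alpha R^\beta$; if $\alpha>0$ the good addable $i$-node is that of the rightmost $A$. The Kashiwara operator $\tilde f_i$ maps $|\nu,\mathbf c\rangle$ to $|\nu\cup\{\gamma\},\mathbf c\rangle$ where $\gamma$ is the good addable $i$-node of $\nu$, and to $0$ if there is none. $\Delta_t=(t,\dots,1)$. For a partition $\lambda$ with $\beta$-set $B$ of odd size, $\lambda^{(2)}=(\pi\{x/2:x\in B\text{ even}\},\pi\{(x-1)/2:x\in B\text{ odd}\})$, $\pi(X)$ the partition with $\beta$-set $X$; if $\lambda$ has $2$-core $\Delta_t$, $\bar\lambda^{(2)}$ equals $\lambda^{(2)}$ for $t$ even and the swapped pair for $t$ odd; $\Phi_t(\nu)$ is the unique partition with $2$-core $\Delta_t$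 and $\bar\lambda^{(2)}=\nu$. *)

From mathcomp Require Import all_boot all_order all_algebra.
Set Implicit Arguments. Unset Strict Implicit. Unset Printing Implicit Defensive.
Import Order.TTheory GRing.Theory Num.Theory.

(* A partition is a nonincreasing list of positive parts; rows are 1-indexed:
   the a-th part (a >= 1) is  nth 0 la a.-1 . *)
Definition is_partition (la : seq nat) : bool :=
  sorted geq la && all (fun x => 0 < x) la.

Definition bipartition := (seq nat * seq nat)%type.
Definition is_bipartition (nu : bipartition) : bool :=
  is_partition nu.1 && is_partition nu.2.

Definition part (la : seq nat) (a : nat) : nat := nth 0 la a.-1.

(* a node (a, b, j): row a, column b (both 1-indexed), component j in {1,2} *)
Definition node := (nat * nat * nat)%type.
Definition nrow (g : node) : nat := g.1.1.
Definition ncol (g : node) : nat := g.1.2.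
Definition ncomp (g : node) : nat := g.2.

Definition charge_of (c : int * int) (j : nat) : int := if j == 1 then c.1 else c.2.

Definition content (c : int * int) (g : node) : int :=
  (ncol g)%:Z - (nrow g)%:Z + charge_of c (ncomp g).

Definition residue (e : nat) (c : int * int) (g : node) : int :=
  (content c g %% (e%:Z))%Z.

Definition addable_nodes (la : seq nat) (j : nat) : seq node :=
  [seq (a, (part la a).+1, j) |
     a <- iota 1 (size la).+1 & (a == 1) || (part la a < part la a.-1)].

Definition removable_nodes (la : seq nat) (j : nat) : seq node :=
  [seq (a, part la a, j) | a <- iota 1 (size la) & part la a.+1 < part la a].

(* letters: (true, g) = A (addable g), (false, g) = R (removable g) *)
Definition letter := (bool * node)%type.

Definition letter_le (c : int * int) (x y : letter) : bool :=
  (content c x.2 < content c y.2)%R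
  || ((content c x.2 == content c y.2) && (ncomp y.2 <= ncomp x.2)).

Definition i_word (e : nat) (c : int * int) (i : nat) (mu : bipartition)
  : seq letter :=
  let As := addable_nodes mu.1 1 ++ addable_nodes mu.2 2 in
  let Rs := removable_nodes mu.1 1 ++ removable_nodes mu.2 2 in
  let w := [seq (true, g) | g <- As] ++ [seq (false, g) | g <- Rs] in
  sort (letter_le c) [seq l <- w | residue e c l.2 == Posz i].

Fixpoint cancel_RA (w : seq letter) : seq letter :=
  match w with
  | (false, g) :: (true, h) :: w' => w'
  | l :: w' => l :: cancel_RA w'
  | [::] => [::]
  end.

(* recursive cancellation of all consecutive RA (at most size w steps) *)
Definition reduced_word (w : seq letter) : seq letter :=
  iter (size w) cancel_RA w.

Definition good_addable (e : nat) (c : int * int) (i : nat) (mu : bipartition)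
  : option node :=
  ohead (rev [seq l.2 | l <- reduced_word (i_word e c i mu) & l.1]).

Definition add_node (mu : bipartition) (g : node) : bipartition :=
  if ncomp g == 1 then (incr_nth mu.1 (nrow g).-1, mu.2)
  else (mu.1, incr_nth mu.2 (nrow g).-1).

(* f_i |mu, c> = |mu u {gamma}, c>, or 0 (represented by None) *)
Definition f_tilde (e : nat) (c : int * int) (i : nat) (mu : bipartition)
  : option bipartition :=
  omap (add_node mu) (good_addable e c i mu).

(* beta-set of la with r beads (r >= size la) *)
Definition beta_set (la : seq nat) (r : nat) : seq nat :=
  [seq nth 0 la a + r - a.+1 | a <- iota 0 r].

Definition part_of_beta (X : seq nat) : seq nat :=
  let s := sort geq (undup X) in
  let k := size s in
  [seq x <- [seq nth 0 s i - (k - i.+1) | i <- iota 0 k] | 0 < x].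

(* lambda^(2), computed from a beta-set of odd size *)
Definition quot2 (la : seq nat) : seq nat * seq nat :=
  let r := if odd (size la) then size la else (size la).+1 in
  let B := beta_set la r in
  (part_of_beta [seq x./2 | x <- B & ~~ odd x],
   part_of_beta [seq x./2 | x <- B & odd x]).

Definition barquot2 (t : nat) (la : seq nat) : seq nat * seq nat :=
  if odd t then ((quot2 la).2, (quot2 la).1) else quot2 la.

(* e-core, via the e-abacus: slide all beads of each runner up *)
Definition core (e : nat) (la : seq nat) : seq nat :=
  let B := beta_set la (size la) in
  part_of_beta
    (flatten [seq [seq r + e * k | k <- iota 0 (count (fun x => x %% e == r) B)]
             | r <- iota 0 e]).

Definition staircase (t : nat) : seq nat := rev (iota 1 t).

Definition is_Phi (t : nat) (nu : bipartition) (la : seq nat) : Prop :=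
  [/\ is_partition la, core 2 la = staircase t & barquot2 t la = nu].

From mathcomp Require Import all_boot all_order all_algebra zify.
Import Order.TTheory GRing.Theory Num.Theory.
Set Implicit Arguments. Unset Strict Implicit. Unset Printing Implicit Defensive.

(* On the 2-abacus with an odd number N of beads, the beta-set of Phi_t(nu_i) is
   that of Phi_t(mu) with one bead moved from some position x_i to x_i + 2: the
   bead of the good node added to mu, which lies on runner 0 or 1 of the
   2-quotient according to its component and the parity of t.  Because the
   charge is (t - (e-1)/2, 0), the position of that bead is 2 j_i plus a
   constant depending only on t and N, modulo e.  Equal e-cores mean equal
   multisets of residues mod e of the beta-sets; since e does not divide 2,
   moving a bead by 2 changes that multiset, so x_1 = x_2 (mod e).  Hence
   2 j_1 = 2 j_2 (mod e), and j_1 = j_2 because e is odd. *)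

(** * Beta-sets *)

Lemma perm_count_mem (T : eqType) (s1 s2 : seq T) :
  (forall x, count_mem x s1 = count_mem x s2) -> perm_eq s1 s2.
Proof. by move=> eq_cnt; apply/allP => x _ /=; rewrite eq_cnt. Qed.

Lemma perm_set_nth (T : eqType) (x0 : T) (s : seq T) k y : k < size s ->
  perm_eq (nth x0 s k :: set_nth x0 s k y) (y :: s).
Proof.
move=> lt_k; rewrite set_nthE lt_k.
rewrite -[in y :: s](cat_take_drop k s) (drop_nth x0 lt_k).
by apply/permP => P; rewrite /= !count_cat /=; lia.
Qed.

Lemma nth_sorted_geq (s : seq nat) i : sorted geq s -> nth 0 s i.+1 <= nth 0 s i.
Proof.
move=> /(sortedP 0) s_geq; case: (ltnP i.+1 (size s)) => [/s_geq //|le_si].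
by rewrite nth_default.
Qed.

Definition shift_beads (X : seq nat) : seq nat := map succn X ++ [:: 0].

Lemma size_beta_set la r : size (beta_set la r) = r.
Proof. by rewrite size_map size_iota. Qed.

Lemma beta_setS la r : size la <= r ->
  beta_set la r.+1 = shift_beads (beta_set la r).
Proof.
move=> le_la_r; rewrite /beta_set /shift_beads -addn1 iotaD map_cat /= add0n.
congr (_ ++ _); last by rewrite nth_default // addn1 subnn.
rewrite -map_comp; apply/eq_in_map => a; rewrite mem_iota /=; lia.
Qed.

Lemma beta_set_addn la r d : size la <= r ->
  beta_set la (r + d) = iter d shift_beads (beta_set la r).
Proof.
move=> le_la_r; elim: d => [|d IHd]; first by rewrite addn0.
by rewrite addnS beta_setS ?IHd //; lia.
Qed.

Lemma beta_set_cons x la r : beta_set (x :: la) r.+1 = x + r :: beta_set la r.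
Proof.
rewrite /beta_set /= (iotaDl 1 0 r) -map_comp; congr (_ :: _); first lia.
by apply/eq_map => a /=; rewrite add0n; lia.
Qed.

Lemma beta_set_uniq la r : sorted geq la -> uniq (beta_set la r).
Proof.
move=> la_geq; apply: (@sorted_uniq _ [rel x y | y < x] (rev_trans ltn_trans) ltnn).
apply/(sortedP 0) => i; rewrite size_beta_set => lt_ir.
rewrite !(nth_map 0) ?size_iota //; last lia.
rewrite !nth_iota ?add0n //; last lia.
have := nth_sorted_geq i la_geq; lia.
Qed.

Lemma size_part_of_beta X : size (part_of_beta X) <= size X.
Proof.
rewrite /part_of_beta size_filter (leq_trans (count_size _ _)) //.
by rewrite size_map size_iota size_sort size_undup.
Qed.

Lemma nth_filter_pos (s : seq nat) a : sorted geq s ->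
  nth 0 [seq x <- s | 0 < x] a = nth 0 s a.
Proof.
elim: s a => [|x s IHs] //= a s_geq; have /IHs IH := path_sorted s_geq.
case: (posnP x) => [x0|x_gt0]; last by case: a.
have s0 y : y \in s -> y = 0.
  by move=> s_y; move/allP: (order_path_min (rev_trans leq_trans) s_geq) => /(_ y s_y); lia.
have -> : [seq y <- s | 0 < y] = [::].
  by apply/eqP; rewrite -(negbK (_ == _)) -has_filter; apply/hasPn => y /s0 ->.
case: a => [|a] //=; case: (ltnP a (size s)) => [lt_as|]; last by move=> ?; rewrite nth_default.
by rewrite (s0 _ (mem_nth 0 lt_as)).
Qed.

Lemma nth_sorted_uniq_geq (s : seq nat) a : sorted geq s -> uniq s ->
  a < size s -> size s - a.+1 <= nth 0 s a.
Proof.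
elim: s a => [|x s IHs] //= a s_geq /andP [s'x s_uniq]; have s'_geq := path_sorted s_geq.
case: a => [|a] lt_a /=; last exact: IHs.
case: s s_geq s'x s_uniq IHs {s'_geq lt_a} => [|y s] //= /andP [le_yx y_geq] s'x y_uniq IHs.
have := IHs 0 y_geq y_uniq isT; have : y != x by apply: contraNneq s'x => ->; rewrite inE eqxx.
by move: le_yx => /=; lia.
Qed.

Lemma beta_set_part_of_beta X : uniq X ->
  beta_set (part_of_beta X) (size X) = sort geq X.
Proof.
move=> X_uniq; rewrite /part_of_beta (undup_id X_uniq).
set s := sort geq X; set g := fun i => nth 0 s i - (size X - i.+1).
have s_geq : sorted geq s by apply: sort_sorted => a b; apply: leq_total.
have s_uniq : uniq s by rewrite sort_uniq.
have size_s : size s = size X by rewrite size_sort.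
have s_bound i : i < size X -> size X - i.+1 <= nth 0 s i.
  by rewrite -size_s; apply: nth_sorted_uniq_geq.
have g_geq : sorted geq (mkseq g (size X)).
  apply/(sortedP 0) => i; rewrite size_mkseq => lt_iX.
  rewrite !nth_mkseq ?(ltnW lt_iX) // /g.
  have le_s := nth_sorted_geq i s_geq.
  have : nth 0 s i != nth 0 s i.+1 by rewrite nth_uniq ?size_s //; lia.
  by move: (s_bound _ lt_iX) le_s; lia.
rewrite size_s; apply: (@eq_from_nth _ 0); first by rewrite size_beta_set size_s.
move=> i; rewrite size_beta_set => lt_iX.
rewrite (nth_map 0) ?size_iota // nth_iota // add0n.
rewrite (nth_filter_pos _ g_geq) nth_mkseq // /g.
by move: (s_bound _ lt_iX); lia.
Qed.

Lemma size_iter_shift_beads d X : size (iter d shift_beads X) = size X + d.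
Proof. by elim: d => [|d IHd] /=; rewrite ?addn0 // size_cat size_map IHd addn1 addnS. Qed.

Lemma perm_iter_shift_beads d X Y :
  perm_eq X Y -> perm_eq (iter d shift_beads X) (iter d shift_beads Y).
Proof.
elim: d => [|d IHd] //= /IHd perm_XY.
by rewrite /shift_beads perm_cat2r perm_map.
Qed.

Lemma perm_beta_set_part_of_beta d X : uniq X ->
  perm_eq (iter d shift_beads X) (beta_set (part_of_beta X) (size X + d)).
Proof.
move=> X_uniq; rewrite beta_set_addn ?size_part_of_beta //.
by apply: perm_iter_shift_beads; rewrite beta_set_part_of_beta // perm_sym perm_sort.
Qed.

(** * Residues of beta-sets and e-cores *)

Definition residues (e : nat) (X : seq nat) : seq nat := map (modn^~ e) X.

Definition core_beads (e : nat) (B : seq nat) : seq nat :=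
  flatten [seq [seq r + e * k | k <- iota 0 (count (fun x => x %% e == r) B)]
          | r <- iota 0 e].

Lemma modn_addrM e r k : r < e -> (r + e * k) %% e = r.
Proof. by move=> lt_re; rewrite addnC mulnC modnMDl modn_small. Qed.

Lemma core_beads_uniq e B : 0 < e -> uniq (core_beads e B).
Proof.
move=> e_gt0; rewrite /core_beads.
have : all (gtn e) (iota 0 e) by apply/allP => r; rewrite mem_iota.
elim: (iota 0 e) (iota_uniq 0 e) => [|r l IHl] //= /andP [l'r l_uniq] /andP [lt_re lt_le].
rewrite cat_uniq IHl // andbT map_inj_uniq ?iota_uniq /=; last first.
  by move=> a b /eqP; rewrite eqn_add2l eqn_pmul2l // => /eqP.
apply/hasPn => _ /flatten_mapP [r' l_r' /mapP [k' _ ->]].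
apply/mapP => -[k _ /(congr1 (modn^~ e))].
rewrite !modn_addrM //; last exact: (allP lt_le).
by move=> eq_r; move: l'r; rewrite -eq_r l_r'.
Qed.

Lemma residues_core_beads e B : 0 < e ->
  perm_eq (residues e (core_beads e B)) (residues e B).
Proof.
move=> e_gt0; apply: perm_count_mem => r; rewrite /residues !count_map.
have [lt_re|le_er] := ltnP r e; last first.
  rewrite !(eq_count (a2 := pred0)) ?count_pred0 // => x /=;
  by apply/negbTE; rewrite neq_ltn (leq_trans (ltn_pmod _ e_gt0)).
rewrite /core_beads count_flatten -map_comp sumnE big_map.
rewrite (bigD1_seq r) ?mem_iota ?iota_uniq //= big1_seq => [|r' /andP [ne_r'r]].
  rewrite addn0 count_map (eq_count (a2 := predT)) ?count_predT ?size_iota //.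
  by move=> k /=; rewrite modn_addrM ?eqxx.
rewrite mem_iota /= => lt_r'e.
rewrite count_map (eq_count (a2 := pred0)) ?count_pred0 // => k /=.
by rewrite modn_addrM ?(negbTE ne_r'r).
Qed.

Lemma residues_iter_shift_beads e d X Y : perm_eq (residues e X) (residues e Y) ->
  perm_eq (residues e (iter d shift_beads X)) (residues e (iter d shift_beads Y)).
Proof.
have residues_shift Z :
    residues e (shift_beads Z) = map (fun m => m.+1 %% e) (residues e Z) ++ [:: 0 %% e].
  rewrite /residues /shift_beads map_cat -!map_comp; congr (_ ++ _).
  by apply: eq_map => m /=; rewrite -addn1 -[(m %% e).+1]addn1 modnDml.
elim: d => [|d IHd] //= /IHd perm_XY.
by rewrite !residues_shift perm_cat2r perm_map.
Qed.

Lemma residues_beta_set_core e la N : 0 < e -> size la <= N ->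
  perm_eq (residues e (beta_set la N)) (residues e (beta_set (core e la) N)).
Proof.
move=> e_gt0 le_la_N; rewrite -(subnKC le_la_N) beta_set_addn //.
set B := beta_set la (size la); have := residues_core_beads B e_gt0.
set C := core_beads e B; rewrite perm_sym => perm_BC.
have size_C : size C = size la.
  by rewrite -(size_map (modn^~ e)) -(perm_size perm_BC) size_map size_beta_set.
rewrite /core -/B -/C -size_C.
apply: (perm_trans (residues_iter_shift_beads _ perm_BC)); apply: perm_map.
exact: perm_beta_set_part_of_beta (core_beads_uniq B e_gt0).
Qed.

(** * The 2-quotient on the 2-abacus *)

Definition runner (b : bool) (X : seq nat) : seq nat := [seq x./2 | x <- X & odd x == b].

Definition runner_bead (b : bool) (y : nat) : nat := y.*2 + b.

Definition nbeads (b : bool) (X : seq nat) : nat := count (fun x => odd x == b) X.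

Definition abacus2 (P : seq nat * seq nat) (n0 n1 : nat) : seq nat :=
  map (runner_bead false) (beta_set P.1 n0) ++ map (runner_bead true) (beta_set P.2 n1).

Lemma nbeads_cons b x X : nbeads b (x :: X) = (odd x == b) + nbeads b X.
Proof. by []. Qed.

Lemma size_runner b X : size (runner b X) = nbeads b X.
Proof. by rewrite size_map size_filter. Qed.

Lemma runner_uniq b X : uniq X -> uniq (runner b X).
Proof.
move=> X_uniq; rewrite map_inj_in_uniq ?filter_uniq // => x y.
rewrite !mem_filter => /andP [/eqP odd_x _] /andP [/eqP odd_y _] eq_half.
by rewrite -(odd_double_half x) -(odd_double_half y) eq_half odd_x odd_y.
Qed.

Lemma runner_iter_shift_beads b d X :
  runner b (iter d.*2 shift_beads X) = iter d shift_beads (runner b X).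
Proof.
have shift_beads2 Y : shift_beads (shift_beads Y) = map (addn 2) Y ++ [:: 1; 0].
  by rewrite /shift_beads map_cat -map_comp -catA.
elim: d => [|d IHd] //; rewrite doubleS !iterS -IHd shift_beads2.
rewrite /runner /shift_beads filter_cat map_cat filter_map -!map_comp.
congr (_ ++ _); last by case: (b).
rewrite (@eq_filter _ _ (fun x => odd x == b)) => [|x /=]; last by rewrite add0n negbK.
by apply: eq_map => x /=; rewrite add0n.
Qed.

Lemma perm_runners X : perm_eq X
  (map (runner_bead false) (runner false X) ++ map (runner_bead true) (runner true X)).
Proof.
have runnerK b : map (runner_bead b) (runner b X) = [seq x <- X | odd x == b].
  rewrite -map_comp -[RHS]map_id; apply/eq_in_map => x.
  by rewrite mem_filter => /andP [/eqP <- _]; rewrite /= /runner_bead addnC odd_double_half.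
rewrite !runnerK -(perm_filterC (fun x => odd x == false)) perm_cat2l.
by rewrite (@eq_filter _ _ (predC (fun x => odd x == false))) // => x /=; case: odd.
Qed.

Lemma beta_set_quot2 la N (B := beta_set la N) :
  sorted geq la -> odd N -> size la <= N ->
  [/\ perm_eq B (abacus2 (quot2 la) (nbeads false B) (nbeads true B)),
      size (quot2 la).1 <= nbeads false B & size (quot2 la).2 <= nbeads true B].
Proof.
move=> la_geq odd_N le_la_N.
set r := if odd (size la) then size la else (size la).+1.
have le_la_r : size la <= r by rewrite /r; case: ifP.
have odd_r : odd r by rewrite /r; case: ifP => //= ->.
have le_r_N : r <= N.
  rewrite /r; case: ifP => odd_la //; rewrite ltn_neqAle le_la_N andbT.
  by apply: contraFneq odd_la => ->.
have [d def_N] : exists d, N = r + d.*2.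
  exists (N - r)./2; have := odd_double_half (N - r).
  by rewrite oddB // odd_N odd_r /=; lia.
set Br := beta_set la r.
have def_B : B = iter d.*2 shift_beads Br by rewrite /B def_N beta_set_addn.
have quot2E : quot2 la = (part_of_beta (runner false Br), part_of_beta (runner true Br)).
  rewrite /quot2 /runner; congr (part_of_beta _, part_of_beta _); congr map;
  by apply: eq_filter => x; case: odd.
have nbeadsE b : nbeads b B = size (runner b Br) + d.
  by rewrite -size_runner def_B runner_iter_shift_beads size_iter_shift_beads.
rewrite quot2E !nbeadsE; split; try exact: leq_trans (size_part_of_beta _) (leq_addr _ _).
apply: (perm_trans (perm_runners B)); rewrite def_B !runner_iter_shift_beads.
have Br_uniq := beta_set_uniq r la_geq.
by apply: perm_cat; apply: perm_map; apply: perm_beta_set_part_of_beta; apply: runner_uniq.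
Qed.

(** * The 2-core Delta_t *)

Lemma staircaseS t : staircase t.+1 = t.+1 :: staircase t.
Proof. by rewrite /staircase -[t.+1]addn1 iotaD rev_cat add1n addn1. Qed.

Lemma beta_set_nilS N : beta_set [::] N.+1 = N :: beta_set [::] N.
Proof.
have -> : beta_set [::] N.+1 = beta_set [:: 0] N.+1 by apply: eq_map => -[|[|a]].
by rewrite beta_set_cons.
Qed.

Lemma nbeads_beta_set_nil N :
  nbeads false (beta_set [::] N) = nbeads true (beta_set [::] N) + odd N.
Proof.
elim: N => [|N IHN] //; rewrite beta_set_nilS !nbeads_cons IHN /=.
by case: (odd N) => /=; lia.
Qed.

Lemma nbeads_beta_set_staircase t N : t <= N ->
  nbeads false (beta_set (staircase t) N) + (if odd (N + t) then 0 else t)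
  = nbeads true (beta_set (staircase t) N) + (if odd (N + t) then t.+1 else 0).
Proof.
elim: t N => [|t IHt] N le_tN.
  by rewrite addn0 nbeads_beta_set_nil; case: (odd N); rewrite ?addn0.
case: N le_tN => [|N] // le_tN; have := IHt N le_tN.
rewrite staircaseS beta_set_cons !nbeads_cons addnS /= negbK (addnC t N).
by case: (odd (N + t)) => /=; lia.
Qed.

(** * Good nodes *)

Lemma mem_cancel_RA (w : seq letter) l : l \in cancel_RA w -> l \in w.
Proof.
elim: w => [|[[] g] w IHw] //=; first by rewrite !inE => /orP [->|/IHw ->]; rewrite ?orbT.
case: w IHw => [|[[] h] w] IHw //; first by rewrite !inE => ->; rewrite !orbT.
by rewrite !inE => /orP [->|/IHw]; rewrite ?inE // => ->; rewrite !orbT.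
Qed.

Lemma mem_reduced_word (w : seq letter) l : l \in reduced_word w -> l \in w.
Proof. by rewrite /reduced_word; elim: (size w) => [|n IHn] //= /mem_cancel_RA. Qed.

Definition component (mu : bipartition) (j : nat) : seq nat :=
  if j == 1 then mu.1 else mu.2.

Lemma f_tilde_addable e c i mu nu : f_tilde e c i mu = Some nu ->
  exists k j, let g := (k.+1, (nth 0 (component mu j) k).+1, j) in
    [/\ j = 1 \/ j = 2, nu = add_node mu g & residue e c g = i].
Proof.
rewrite /f_tilde /good_addable; set s := [seq l.2 | l <- _ & l.1].
case def_g : (ohead (rev s)) => [g|] //= [<-].
have : g \in s by move: def_g; rewrite -mem_rev; case: (rev s) => //= y s' [->]; exact: mem_head.
case/mapP => -[b g'] /=; rewrite mem_filter => /andP [/= b_true /mem_reduced_word] + -> {g def_g}.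
rewrite {b}b_true /i_word mem_sort mem_filter => /andP [/eqP res_g' w_g']; move: w_g' res_g'.
rewrite mem_cat => /orP [] /mapP [g'' add_g''] // [->] {g'}; move: add_g''.
rewrite mem_cat /addable_nodes => /orP [] /mapP [a];
  rewrite mem_filter mem_iota => /andP [_ /andP [a_gt0 _]] -> res_g.
- by exists a.-1, 1; rewrite /part (prednK a_gt0) in res_g *; split; [left | |].
- by exists a.-1, 2; rewrite /part (prednK a_gt0) in res_g *; split; [right | |].
Qed.

(** * The bead of the good node in Phi_t *)

Definition charge (e t : nat) : int * int := ((t%:Z - ((e - 1) %/ 2)%:Z)%R, 0%R).

Definition swap_if (b : bool) (P : seq nat * seq nat) : seq nat * seq nat :=
  if b then (P.2, P.1) else P.

Definition stair_beads (b : bool) (t N : nat) : nat := nbeads b (beta_set (staircase t) N).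

(* By the definition of bar-lambda^(2), nu^1 lies on runner 1 when t is odd and on
   runner 0 when t is even. *)
Definition Phi_abacus (t : nat) (nu : bipartition) (N : nat) : seq nat :=
  abacus2 (swap_if (odd t) nu) (stair_beads false t N) (stair_beads true t N).

Lemma nbeads_residues2 b X : nbeads b X = count_mem (b : nat) (residues 2 X).
Proof. by rewrite count_map; apply: eq_count => x /=; rewrite modn2; case: odd; case: b. Qed.

Lemma beta_set_Phi t nu la N : is_Phi t nu la -> odd N -> size la <= N ->
  [/\ perm_eq (beta_set la N) (Phi_abacus t nu N),
      size (swap_if (odd t) nu).1 <= stair_beads false t N
    & size (swap_if (odd t) nu).2 <= stair_beads true t N].
Proof.
case=> /andP [la_geq _] core_la bar_la odd_N le_la_N.
have quot2_la : quot2 la = swap_if (odd t) nu.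
  by rewrite -bar_la /barquot2 /swap_if; case: (odd t); case: (quot2 la).
have nbeadsE b : nbeads b (beta_set la N) = stair_beads b t N.
  rewrite /stair_beads !nbeads_residues2 -core_la; apply/permP.
  exact: residues_beta_set_core.
by have [] := beta_set_quot2 la_geq odd_N le_la_N; rewrite quot2_la !nbeadsE.
Qed.

Lemma perm_beta_set_incr_nth p k n (y := nth 0 p k + n - k.+1) : k < n ->
  perm_eq (y :: beta_set (incr_nth p k) n) (y.+1 :: beta_set p n).
Proof.
move=> lt_kn; have nth_beta a : a < n -> nth 0 (beta_set p n) a = nth 0 p a + n - a.+1.
  by move=> lt_an; rewrite (nth_map 0) ?size_iota // nth_iota.
have -> : beta_set (incr_nth p k) n = set_nth 0 (beta_set p n) k y.+1.
  apply: (@eq_from_nth _ 0) => [|a]; rewrite ?size_set_nth !size_beta_set ?(maxn_idPr lt_kn) //.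
  move=> lt_an; rewrite nth_set_nth /= (nth_map 0) ?size_iota // nth_iota // add0n.
  rewrite nth_incr_nth nth_beta // [k == a]eq_sym; case: eqP => [->|_] /=; rewrite /y; lia.
by rewrite -[y in y :: _]nth_beta //; apply: perm_set_nth; rewrite size_beta_set.
Qed.

Definition runner_part (b : bool) (P : seq nat * seq nat) : seq nat :=
  if b then P.2 else P.1.

Definition incr_runner (b : bool) (P : seq nat * seq nat) (k : nat) : seq nat * seq nat :=
  if b then (P.1, incr_nth P.2 k) else (incr_nth P.1 k, P.2).

Lemma perm_abacus2_incr b P n0 n1 k (n := if b then n1 else n0)
    (x := runner_bead b (nth 0 (runner_part b P) k + n - k.+1)) : k < n ->
  perm_eq (x :: abacus2 (incr_runner b P k) n0 n1) (x.+2 :: abacus2 P n0 n1).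
Proof.
move=> lt_kn; have /(perm_map (runner_bead b)) /permP perm_runner :=
  perm_beta_set_incr_nth (runner_part b P) lt_kn.
apply/permP => Q; have := perm_runner Q; rewrite /x /n /abacus2 /runner_bead /= doubleS !addSn.
by case: (b) => /=; rewrite !count_cat /=; lia.
Qed.

Lemma swap_add_node t mu k p c (b := odd t == (c == 1)) : c = 1 \/ c = 2 ->
  swap_if (odd t) (add_node mu (k.+1, p, c)) = incr_runner b (swap_if (odd t) mu) k
  /\ runner_part b (swap_if (odd t) mu) = component mu c.
Proof. by rewrite /b; case=> ->; case: (odd t). Qed.

(* Position of the bead of a node minus twice its content, for a node of component 2;
   for component 1 the charge shifts it by e. *)
Definition bead_offset (t N : nat) : int :=
  if odd t then (2 * (stair_beads false t N)%:Z - 2)%R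
  else (2 * (stair_beads true t N)%:Z - 1)%R.

Lemma runner_bead_node e t N k p c (b := odd t == (c == 1))
    (n := if b then stair_beads true t N else stair_beads false t N) :
  odd e -> odd N -> t <= N -> c = 1 \/ c = 2 -> k < n ->
  ((runner_bead b (p + n - k.+1))%:Z
     = 2 * content (charge e t) (k.+1, p.+1, c) + bead_offset t N %[mod e])%Z.
Proof.
move=> odd_e odd_N le_tN c12 lt_kn; apply/eqP; rewrite eqz_mod_dvd.
apply/dvdzP; exists (if c == 1 then 1 else 0)%R.
have := nbeads_beta_set_staircase le_tN; have := odd_double_half e.
move: lt_kn; rewrite /n /b /bead_offset /stair_beads oddD odd_N odd_e.
rewrite /content /charge /charge_of /runner_bead /ncol /nrow /ncomp /=.
by case: c12 => ->; case: (odd t) => /=; lia.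
Qed.

Lemma Phi_f_tilde_bead e t mu j nu la N : odd e ->
  f_tilde e (charge e t) j mu = Some nu -> is_Phi t nu la ->
  odd N -> size la <= N -> t <= N ->
  exists2 x, perm_eq (x :: beta_set la N) (x.+2 :: Phi_abacus t mu N)
           & (x%:Z = 2 * j%:Z + bead_offset t N %[mod e])%Z.
Proof.
move=> odd_e /f_tilde_addable [k [c [c12 def_nu res_j]]] Phi_la odd_N le_la_N le_tN.
set p := nth 0 (component mu c) k in def_nu res_j.
have [swap_nu part_mu] := swap_add_node t mu k p.+1 c12.
set b := odd t == (c == 1) in swap_nu part_mu.
set n := if b then stair_beads true t N else stair_beads false t N.
have [perm_la size0 size1] := beta_set_Phi Phi_la odd_N le_la_N.
have lt_kn : k < n.
  move: size0 size1; rewrite def_nu swap_nu /n /incr_runner.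
  by case: (b) => /=; rewrite size_incr_nth; case: ifP; lia.
exists (runner_bead b (p + n - k.+1)).
  apply: (@perm_trans _ (runner_bead b (p + n - k.+1) :: Phi_abacus t nu N)).
    by rewrite perm_cons.
  by rewrite /Phi_abacus def_nu swap_nu /p -part_mu; apply: perm_abacus2_incr.
rewrite /residue in res_j.
by rewrite runner_bead_node // (divz_eq (content _ _) e) res_j mulrDr mulrA -addrA modzMDl.
Qed.

Lemma eqn_mod_moved_beads e x1 x2 (B1 B2 W : seq nat) : ~~ (e %| 2) ->
  perm_eq (residues e B1) (residues e B2) ->
  perm_eq (x1 :: B1) (x1.+2 :: W) -> perm_eq (x2 :: B2) (x2.+2 :: W) ->
  x1 = x2 %[mod e].
Proof.
move=> e_ndvd2 /permP eqB /(perm_map (modn^~ e)) /permP perm1.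
move=> /(perm_map (modn^~ e)) /permP perm2.
have x1_moved : (x1.+2 %% e == x1 %% e) = false.
  by apply: contraNF e_ndvd2; rewrite -addn2 -[x1 in _ == x1 %% e]addn0 eqn_modDl mod0n.
move: (perm1 (pred1 (x1 %% e))) (perm2 (pred1 (x1 %% e))) (eqB (pred1 (x1 %% e))).
rewrite /residues /= eqxx x1_moved.
case: (boolP (x2 %% e == x1 %% e)) => [/eqP -> // | _] cnt1 cnt2 cnt12.
by exfalso; move: cnt1 cnt2; rewrite cnt12; case: (_ == _); lia.
Qed.

Lemma eq_of_double_eqz_mod (e a b : nat) : odd e -> a < e -> b < e ->
  (2 * a%:Z = 2 * b%:Z %[mod e])%Z -> a = b.
Proof.
move=> odd_e lt_ae lt_be /eqP; rewrite eqz_mod_dvd -mulrBr Gauss_dvdzr; last first.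
  by rewrite coprimezE /= coprimen2.
by rewrite -eqz_mod_dvd !modz_small ?lerz_nat ?ltz_nat // => /eqP [].
Qed.

Theorem proposition7p9 (e t : nat) (he1 : 1 < e) (he_odd : odd e)
  (mu : bipartition) (hmu : is_bipartition mu)
  (j1 j2 : nat) (hj1 : j1 < e) (hj2 : j2 < e) (hj12 : j1 != j2)
  (nu1 nu2 : bipartition)
  (hf1 : f_tilde e ((t%:Z - ((e - 1) %/ 2)%:Z)%R, 0%R) j1 mu = Some nu1)
  (hf2 : f_tilde e ((t%:Z - ((e - 1) %/ 2)%:Z)%R, 0%R) j2 mu = Some nu2)
  (la1 la2 : seq nat) (hla1 : is_Phi t nu1 la1) (hla2 : is_Phi t nu2 la2) :
  core e la1 <> core e la2.
Proof.
move=> eq_core; set N := (size la1 + size la2 + t).*2.+1.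
have odd_N : odd N by rewrite /= odd_double.
have [le_la1_N le_la2_N le_tN] : [/\ size la1 <= N, size la2 <= N & t <= N].
  by rewrite /N -addnn; split; lia.
have [x1 perm1 pos1] := Phi_f_tilde_bead he_odd hf1 hla1 odd_N le_la1_N le_tN.
have [x2 perm2 pos2] := Phi_f_tilde_bead he_odd hf2 hla2 odd_N le_la2_N le_tN.
have eq_residues : perm_eq (residues e (beta_set la1 N)) (residues e (beta_set la2 N)).
  have e_gt0 : 0 < e := ltnW he1.
  rewrite (perm_trans (residues_beta_set_core e_gt0 le_la1_N)) // eq_core perm_sym.
  exact: residues_beta_set_core.
have e_ndvd2 : ~~ (e %| 2).
  by apply: contraL he_odd => /(dvdn_leq (isT : 0 < 2)) le_e2; have -> : e = 2 by lia.
have /(congr1 Posz) := eqn_mod_moved_beads e_ndvd2 eq_residues perm1 perm2.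
rewrite -!modz_nat pos1 pos2 => /eqP; rewrite eqz_modDr => /eqP.
by move/eq_of_double_eqz_mod => /(_ he_odd hj1 hj2) /eqP; apply/negP.
Qed.
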